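(* (Upper bound) There is an absolute constant $C$ such that for every $n\geq 1$ and every pair of distinct strings $w,w'\in\{0,1\}^n$, there is a first-order sentence over $\tau_{\mathsf{string}}$ with at most $\log_2(n)+C$ quantifiers that is true in $\mathbf{B}_w$ and false in $\mathbf{B}_{w'}$; moreover this sentence can be taken in prenex form with a quantifier prefix that strictly alternates and ends with $\forall$. (Lower bound) For all sufficiently large $n$, there exist two $n$-bit strings $w,w'$ such that every first-order sentence separating $\{\mathbf{B}_w\}$ from $\{\mathbf{B}_{w'}\}$ has at least $\lfloor \log_2 n\rfloor$ quantifiers.
   Context: Vocabulary $\tau_{\mathsf{string}}=\langle <, S;\ \mathsf{min},\mathsf{max}\rangle$ with $<$ binary, $S$ unary, $\mathsf{min},\mathsf{max}$ constants. A string $w=w_1\cdots w_n\in\{0,1\}^n$ ($n\geq 1$) is encoded by the structure $\mathbf{B}_w$ with universe $\{1,\dots,n\}$, $<$ the usual order, $S=\{i: w_i=1\}$, $\mathsf{min}=1$, $\mathsf{max}=n$. A sentence separates $\mathcal{A}$ from $\mathcal{B}$ if it holds in every structure of $\mathcal{A}$ and fails in every structure of $\mathcal{B}$. The number of quantifiers is the number of quantifier occurrences. *)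

From Stdlib Require Import Reals Arith List Lia.
Import ListNotations.

Inductive term : Type :=
| TVar : nat -> term
| TMin : term
| TMax : term.

Inductive formula : Type :=
| FEq  : term -> term -> formula
| FLt  : term -> term -> formula
| FS   : term -> formula
| FNot : formula -> formula
| FAnd : formula -> formula -> formula
| FOr  : formula -> formula -> formula
| FImp : formula -> formula -> formula
| FEx  : nat -> formula -> formula
| FAll : nat -> formula -> formula.

Fixpoint qcount (phi : formula) : nat :=
  match phi with
  | FEq _ _ | FLt _ _ | FS _ => 0
  | FNot p => qcount p
  | FAnd p q | FOr p q | FImp p q => qcount p + qcount q
  | FEx _ p | FAll _ p => S (qcount p)
  end.

Definition term_var (t : term) (x : nat) : Prop :=
  match t with TVar y => y = x | _ => False end.

Fixpoint free_in (x : nat) (phi : formula) : Prop :=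
  match phi with
  | FEq t u | FLt t u => term_var t x \/ term_var u x
  | FS t => term_var t x
  | FNot p => free_in x p
  | FAnd p q | FOr p q | FImp p q => free_in x p \/ free_in x q
  | FEx y p | FAll y p => y <> x /\ free_in x p
  end.

Definition sentence (phi : formula) : Prop := forall x, ~ free_in x phi.

Fixpoint quantifier_free (phi : formula) : Prop :=
  match phi with
  | FEq _ _ | FLt _ _ | FS _ => True
  | FNot p => quantifier_free p
  | FAnd p q | FOr p q | FImp p q => quantifier_free p /\ quantifier_free q
  | FEx _ _ | FAll _ _ => False
  end.

(* Semantics in B_w: universe {1..n} with n = length w, usual order,
   S = {i | w_i = 1} (w_i = nth (i-1) w), min = 1, max = n. *)
Definition upd (a : nat -> nat) (x i : nat) : nat -> nat :=
  fun y => if Nat.eqb y x then i else a y.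

Definition eval_term (w : list bool) (a : nat -> nat) (t : term) : nat :=
  match t with
  | TVar x => a x
  | TMin => 1
  | TMax => length w
  end.

Fixpoint sat (w : list bool) (a : nat -> nat) (phi : formula) : Prop :=
  match phi with
  | FEq t u => eval_term w a t = eval_term w a u
  | FLt t u => eval_term w a t < eval_term w a u
  | FS t => nth (eval_term w a t - 1) w false = true
  | FNot p => ~ sat w a p
  | FAnd p q => sat w a p /\ sat w a q
  | FOr p q => sat w a p \/ sat w a q
  | FImp p q => sat w a p -> sat w a q
  | FEx x p => exists i, 1 <= i <= length w /\ sat w (upd a x i) p
  | FAll x p => forall i, 1 <= i <= length w -> sat w (upd a x i) p
  end.

(* Truth of a sentence in B_w (for sentences the assignment is irrelevant;
   we use the constant assignment to element 1, which lies in the universe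
   when n >= 1). *)
Definition holds (w : list bool) (phi : formula) : Prop := sat w (fun _ => 1) phi.

Definition separates (phi : formula) (w w' : list bool) : Prop :=
  sentence phi /\ holds w phi /\ ~ holds w' phi.

Fixpoint build_prenex (qs : list (bool * nat)) (psi : formula) : formula :=
  match qs with
  | [] => psi
  | (true, x) :: qs' => FAll x (build_prenex qs' psi)
  | (false, x) :: qs' => FEx x (build_prenex qs' psi)
  end.

Fixpoint strictly_alternating (bs : list bool) : Prop :=
  match bs with
  | b1 :: ((b2 :: _) as rest) => b1 <> b2 /\ strictly_alternating rest
  | _ => True
  end.

Definition alt_prenex_ending_forall (phi : formula) : Prop :=
  exists (qs : list (bool * nat)) (psi : formula),
    quantifier_free psi /\ phi = build_prenex qs psi /\
    strictly_alternating (map fst qs) /\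
    qs <> [] /\ fst (last qs (true, 0)) = true.

From Stdlib Require Import Reals Lra Arith List Lia Classical.
Import ListNotations.

(* Upper bound: a single existential picks the position x of a letter where
   the strings differ, and x is pinned down by "x - min >= i - 1 and
   max - x >= n - i".  A bound [D <= q - p] is expressed by halving: it holds
   iff every z in [p, q] is at least about D/2 away from p or from q (a
   universal step), and "E1 <= y - a or E2 <= b - y" holds iff some point
   splits one of these gaps into halves (an existential step).  Each
   quantifier doubles the distance that can be measured, so about log2 n
   quantifiers suffice, and the prefix alternates by construction.

   Lower bound: the two strings with a single 1 at the adjacent middle
   positions ceil(n/2) + 1 and ceil(n/2) cannot be separated with fewer than
   log2 n quantifiers.  In the Ehrenfeucht-Fraisse game, Duplicator keeps
   corresponding gaps between pebbles (min and max included) equal or both at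
   least 2^k when k rounds remain (one more when the gap contains the 1), and
   the distances of pebbles to the 1 equal or both at least 2^k - 1; the
   usual interval-splitting strategy preserves this. *)

Definition agree_from (k : nat) (r r' : nat -> nat) : Prop := forall j, k <= j -> r j = r' j.

Definition binds_below (k : nat) (qs : list (bool * nat)) : Prop :=
  forall q, In q qs -> snd q < k.

Lemma agree_from_upd k r r' x i : x < k -> agree_from k (upd r x i) r' -> agree_from k r r'.
Proof.
  intros Hx H j Hj. rewrite <- (H j Hj). unfold upd.
  destruct (Nat.eqb_spec j x); [lia|reflexivity].
Qed.

Lemma binds_below_cons k b x qs :
  binds_below k ((b, x) :: qs) -> x < k /\ binds_below k qs.
Proof. intros H. split; [apply (H (b, x))|intros q Hq; apply H]; simpl; auto. Qed.

Lemma sat_prenex_congr w k qs psi psi' r : binds_below k qs ->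
  (forall r', agree_from k r r' -> (sat w r' psi <-> sat w r' psi')) ->
  (sat w r (build_prenex qs psi) <-> sat w r (build_prenex qs psi')).
Proof.
  revert r. induction qs as [|[b x] qs IH]; intros r Hb H.
  - apply H. intros j _. reflexivity.
  - apply binds_below_cons in Hb as [Hx Hb].
    assert (K : forall i, sat w (upd r x i) (build_prenex qs psi) <->
                          sat w (upd r x i) (build_prenex qs psi')).
    { intros i. apply IH; auto. intros r' Hr'. apply H. exact (agree_from_upd _ _ _ _ _ Hx Hr'). }
    destruct b; simpl; [setoid_rewrite K|setoid_rewrite K]; reflexivity.
Qed.

Lemma sat_prenex_const w k qs psi (G : Prop) r : 1 <= length w -> binds_below k qs ->
  (forall r', agree_from k r r' -> (sat w r' psi <-> G)) ->
  (sat w r (build_prenex qs psi) <-> G).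
Proof.
  intros Hw. revert r. induction qs as [|[b x] qs IH]; intros r Hb H.
  - apply H. intros j _. reflexivity.
  - apply binds_below_cons in Hb as [Hx Hb].
    assert (K : forall i, sat w (upd r x i) (build_prenex qs psi) <-> G).
    { intros i. apply IH; auto. intros r' Hr'. apply H. exact (agree_from_upd _ _ _ _ _ Hx Hr'). }
    destruct b; simpl; setoid_rewrite K.
    + split; [intros A; apply (A 1); lia|auto].
    + split; [intros [_ [_ A]]; exact A|intros A; exists 1; split; [lia|exact A]].
Qed.

Lemma sat_prenex_guard w k qs psi psi' (G : Prop) r : 1 <= length w -> binds_below k qs ->
  (forall r', agree_from k r r' -> (sat w r' psi <-> G /\ sat w r' psi')) ->
  (sat w r (build_prenex qs psi) <-> G /\ sat w r (build_prenex qs psi')).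
Proof.
  intros Hw Hb H. destruct (classic G) as [HG|HG].
  - rewrite (sat_prenex_congr w k qs psi psi' r Hb); [tauto|].
    intros r' Hr'. rewrite (H r' Hr'). tauto.
  - rewrite (sat_prenex_const w k qs psi False r Hw Hb); [tauto|].
    intros r' Hr'. rewrite (H r' Hr'). tauto.
Qed.

Definition term_from (k : nat) (t : term) : Prop :=
  match t with TVar j => k <= j | _ => True end.

Lemma term_from_succ k t : term_from (S k) t -> term_from k t.
Proof. destruct t; simpl; lia. Qed.

Lemma eval_term_agree_upd w k r r' i t : term_from (S k) t ->
  agree_from k (upd r k i) r' -> eval_term w r' t = eval_term w r t.
Proof.
  intros Ht Ha. destruct t as [j| |]; simpl in *; auto.
  rewrite <- (Ha j ltac:(lia)). unfold upd. destruct (Nat.eqb_spec j k); [lia|reflexivity].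
Qed.

Lemma eval_term_upd_from w k r z t : term_from (S k) t ->
  eval_term w (upd r k z) t = eval_term w r t.
Proof.
  intros Ht. apply (eval_term_agree_upd w k r (upd r k z) z t Ht). intros j _. reflexivity.
Qed.

Lemma eval_term_upd_var w k r z : eval_term w (upd r k z) (TVar k) = z.
Proof. simpl. unfold upd. rewrite Nat.eqb_refl. reflexivity. Qed.

Lemma agree_upd_var k r r' i : agree_from k (upd r k i) r' -> r' k = i.
Proof. intros Ha. rewrite <- (Ha k (le_n k)). unfold upd. rewrite Nat.eqb_refl. reflexivity. Qed.

(** * Distance formulas *)

Definition FTrue : formula := FEq TMin TMin.
Definition FLe (a b : term) : formula := FOr (FLt a b) (FEq a b).

Definition gap_atom (a b : term) (D : nat) : formula :=
  match D with 0 => FTrue | 1 => FLt a b | _ => FNot FTrue end.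

Definition gap_pos (a b : term) (D : nat) : formula :=
  match D with 0 => FTrue | _ => FLt a b end.

Lemma sat_FTrue w r : sat w r FTrue.
Proof. reflexivity. Qed.

Lemma sat_FLe w r a b : sat w r (FLe a b) <-> eval_term w r a <= eval_term w r b.
Proof. simpl. lia. Qed.

Lemma sat_gap_atom w r a b D : D <= 1 ->
  (sat w r (gap_atom a b D) <-> D <= eval_term w r b - eval_term w r a).
Proof. intros HD. destruct D as [|[|D]]; simpl; lia. Qed.

Lemma sat_gap_pos w r a b D :
  sat w r (gap_pos a b D) <-> D = 0 \/ eval_term w r a < eval_term w r b.
Proof. destruct D; simpl; lia. Qed.

(* [D <= y - x] iff every point of [x, y] is at least [up_half D] from [x] or
   [low_half D] from [y]; [E <= y - x] iff some point of [x, y] is at least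
   [up_half' E] from [x] and [low_half' E] from [y]. *)
Definition up_half (D : nat) : nat := (D + 2) / 2.
Definition low_half (D : nat) : nat := (D + 1) / 2.
Definition up_half' (E : nat) : nat := (E + 1) / 2.
Definition low_half' (E : nat) : nat := E / 2.

(* [gaps_ge k p q s D1 D2] says [D1 <= q - p /\ D2 <= s - q] and
   [gap_split_ge k a y b E1 E2] says [E1 <= y - a \/ E2 <= b - y], once the
   matrices are put under the prefixes [prefix_forall k], [prefix_exists k];
   the quantifier added at level [S k] binds [TVar k]. *)
Fixpoint gaps_ge (k : nat) (p q s : term) (D1 D2 : nat) {struct k} : formula :=
  match k with
  | 0 => FAnd (gap_atom p q D1) (gap_atom q s D2)
  | S k' => FAnd (FAnd (gap_pos p q D1) (gap_pos q s D2))
      (FAnd (FImp (FAnd (FLe p (TVar k')) (FLe (TVar k') q))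
                  (if D1 <=? 1 then FTrue
                   else gap_split_ge k' p (TVar k') q (up_half D1) (low_half D1)))
            (FImp (FAnd (FLt q (TVar k')) (FLe (TVar k') s))
                  (if D2 <=? 1 then FTrue
                   else gap_split_ge k' q (TVar k') s (up_half D2) (low_half D2))))
  end
with gap_split_ge (k : nat) (a y b : term) (E1 E2 : nat) {struct k} : formula :=
  match k with
  | 0 => FOr (gap_atom a y E1) (gap_atom y b E2)
  | S k' => FOr
      (FAnd (FAnd (FLe a (TVar k')) (FLe (TVar k') y))
            (gaps_ge k' a (TVar k') y (up_half' E1) (low_half' E1)))
      (FAnd (FAnd (FLt y (TVar k')) (FLe (TVar k') b))
            (gaps_ge k' y (TVar k') b (up_half' E2) (low_half' E2)))
  end.

Fixpoint prefix_forall (k : nat) : list (bool * nat) :=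
  match k with 0 => [] | S k' => (true, k') :: prefix_exists k' end
with prefix_exists (k : nat) : list (bool * nat) :=
  match k with 0 => [] | S k' => (false, k') :: prefix_forall k' end.

Fixpoint gaps_ge_cap (k : nat) : nat :=
  match k with 0 => 1 | S k' => 2 * gap_split_ge_cap k' - 1 end
with gap_split_ge_cap (k : nat) : nat :=
  match k with 0 => 1 | S k' => 2 * gaps_ge_cap k' end.

Lemma prefix_binds_below k :
  binds_below k (prefix_forall k) /\ binds_below k (prefix_exists k).
Proof.
  induction k as [|k [IHf IHe]]; split; intros q Hq; simpl in Hq; try contradiction;
    destruct Hq as [<-|Hq]; simpl; [lia|apply IHe in Hq; lia|lia|apply IHf in Hq; lia].
Qed.

Lemma caps_pos k : 1 <= gaps_ge_cap k /\ 1 <= gap_split_ge_cap k.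
Proof. induction k; simpl; lia. Qed.

Lemma div2_bounds x : 2 * (x / 2) <= x <= 2 * (x / 2) + 1.
Proof. pose proof (Nat.div_mod x 2). pose proof (Nat.mod_upper_bound x 2). lia. Qed.

Lemma halves_spec D : up_half D + low_half D = D + 1 /\ low_half D <= up_half D <= low_half D + 1.
Proof.
  unfold up_half, low_half. pose proof (div2_bounds (D + 2)). pose proof (div2_bounds (D + 1)).
  lia.
Qed.

Lemma halves'_spec E : up_half' E + low_half' E = E /\ low_half' E <= up_half' E <= low_half' E + 1.
Proof.
  unfold up_half', low_half'. pose proof (div2_bounds (E + 1)). pose proof (div2_bounds E). lia.
Qed.

(* [dom] is [[x, y]] or [(x, y]]; both work since the endpoint [x] never
   witnesses a failure. *)
Lemma gap_ge_iff_all_split (dom : nat -> Prop) x y D : x <= y ->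
  (forall z, x < z <= y -> dom z) -> (forall z, dom z -> x <= z <= y) ->
  ((D = 0 \/ x < y) /\
   (forall z, dom z -> D <= 1 \/ up_half D <= z - x \/ low_half D <= y - z))
  <-> D <= y - x.
Proof.
  intros Hxy Hin Hdom. pose proof (halves_spec D). split.
  - intros [Hpos Hall]. destruct (Nat.le_gt_cases D 1); [lia|].
    destruct (Nat.le_gt_cases D (y - x)); [assumption|].
    assert (Hz : dom (Nat.min (x + up_half D - 1) y)) by (apply Hin; lia).
    specialize (Hall _ Hz). lia.
  - intros HD. split; [lia|]. intros z Hz. specialize (Hdom z Hz). lia.
Qed.

Lemma gap_ge_iff_ex_split x y b E1 E2 : x <= y <= b -> 1 <= E2 ->
  (exists v, (x <= v <= y /\ up_half' E1 <= v - x /\ low_half' E1 <= y - v) \/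
             (y < v <= b /\ up_half' E2 <= v - y /\ low_half' E2 <= b - v))
  <-> E1 <= y - x \/ E2 <= b - y.
Proof.
  intros. pose proof (halves'_spec E1). pose proof (halves'_spec E2). split.
  - intros [v [?|?]]; lia.
  - intros [?|?]; [exists (x + up_half' E1)|exists (y + up_half' E2)]; lia.
Qed.

Section Semantics.

Variable w : list bool.
Hypothesis Hw : 1 <= length w.

Definition gaps_ge_spec (k : nat) : Prop :=
  forall r p q s D1 D2, term_from k p -> term_from k q -> term_from k s ->
  1 <= eval_term w r p <= eval_term w r q ->
  eval_term w r q <= eval_term w r s <= length w ->
  D1 <= gaps_ge_cap k -> D2 <= gaps_ge_cap k ->
  (sat w r (build_prenex (prefix_forall k) (gaps_ge k p q s D1 D2)) <->
   D1 <= eval_term w r q - eval_term w r p /\ D2 <= eval_term w r s - eval_term w r q).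

Definition gap_split_ge_spec (k : nat) : Prop :=
  forall r a y b E1 E2, term_from k a -> term_from k y -> term_from k b ->
  1 <= eval_term w r a <= eval_term w r y ->
  eval_term w r y <= eval_term w r b <= length w ->
  1 <= E1 <= gap_split_ge_cap k -> 1 <= E2 <= gap_split_ge_cap k ->
  (sat w r (build_prenex (prefix_exists k) (gap_split_ge k a y b E1 E2)) <->
   E1 <= eval_term w r y - eval_term w r a \/ E2 <= eval_term w r b - eval_term w r y).

Lemma gaps_ge_spec_0 : gaps_ge_spec 0.
Proof.
  intros r p q s D1 D2 _ _ _ _ _ HD1 HD2. simpl in HD1, HD2.
  cbn [prefix_forall build_prenex sat gaps_ge].
  rewrite !sat_gap_atom by lia. tauto.
Qed.

Lemma gap_split_ge_spec_0 : gap_split_ge_spec 0.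
Proof.
  intros r a y b E1 E2 _ _ _ _ _ HE1 HE2. simpl in HE1, HE2.
  cbn [prefix_exists build_prenex sat gap_split_ge].
  rewrite !sat_gap_atom by lia. tauto.
Qed.

Section Step.

Variable k : nat.

Lemma sat_gap_split_ge_branch r x y D z : gap_split_ge_spec k ->
  term_from (S k) x -> term_from (S k) y ->
  1 <= eval_term w r x <= z -> z <= eval_term w r y <= length w -> D <= gaps_ge_cap (S k) ->
  (sat w (upd r k z) (build_prenex (prefix_exists k)
     (if D <=? 1 then FTrue else gap_split_ge k x (TVar k) y (up_half D) (low_half D))) <->
   D <= 1 \/ up_half D <= z - eval_term w r x \/ low_half D <= eval_term w r y - z).
Proof.
  intros IH Hx Hy Hxz Hzy HD. destruct (Nat.leb_spec D 1).
  - rewrite (sat_prenex_const w k _ _ True); [tauto|auto|apply prefix_binds_below|].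
    intros. split; auto using sat_FTrue.
  - pose proof (halves_spec D). simpl in HD. unfold gap_split_ge_spec in IH.
    rewrite IH; rewrite ?eval_term_upd_var, ?eval_term_upd_from by assumption;
      first [apply term_from_succ; assumption | lia | simpl; lia].
Qed.

Lemma sat_gaps_ge_succ_at r p q s D1 D2 z : gap_split_ge_spec k ->
  term_from (S k) p -> term_from (S k) q -> term_from (S k) s ->
  1 <= eval_term w r p <= eval_term w r q ->
  eval_term w r q <= eval_term w r s <= length w ->
  D1 <= gaps_ge_cap (S k) -> D2 <= gaps_ge_cap (S k) -> 1 <= z <= length w ->
  let pv := eval_term w r p in let qv := eval_term w r q in let sv := eval_term w r s in
  (sat w (upd r k z) (build_prenex (prefix_exists k) (gaps_ge (S k) p q s D1 D2)) <->
   ((D1 = 0 \/ pv < qv) /\ (D2 = 0 \/ qv < sv)) /\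
   (pv <= z <= qv -> D1 <= 1 \/ up_half D1 <= z - pv \/ low_half D1 <= qv - z) /\
   (qv < z <= sv -> D2 <= 1 \/ up_half D2 <= z - qv \/ low_half D2 <= sv - z)).
Proof.
  intros IH Hp Hq Hs Hpq Hqs HD1 HD2 Hz pv qv sv.
  destruct (prefix_binds_below k) as [_ Hb].
  set (A := (D1 = 0 \/ pv < qv) /\ (D2 = 0 \/ qv < sv)).
  set (B1 := if D1 <=? 1 then FTrue else gap_split_ge k p (TVar k) q (up_half D1) (low_half D1)).
  set (B2 := if D2 <=? 1 then FTrue else gap_split_ge k q (TVar k) s (up_half D2) (low_half D2)).
  assert (Hbody : forall r', agree_from k (upd r k z) r' ->
    (sat w r' (gaps_ge (S k) p q s D1 D2) <->
     A /\ (pv <= z <= qv -> sat w r' B1) /\ (qv < z <= sv -> sat w r' B2))).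
  { intros r' Ha. cbn [gaps_ge sat]. rewrite !sat_gap_pos, !sat_FLe. cbn [eval_term].
    rewrite (agree_upd_var k r r' z Ha), !(eval_term_agree_upd w k r r' z) by auto.
    fold pv qv sv. unfold A. intuition lia. }
  destruct (Nat.le_gt_cases pv z); [destruct (Nat.le_gt_cases z qv)|].
  - rewrite (sat_prenex_guard w k _ _ B1 A _ Hw Hb);
      [|intros r' Ha; rewrite (Hbody r' Ha); intuition lia].
    unfold B1. rewrite sat_gap_split_ge_branch by (auto; lia). intuition lia.
  - destruct (Nat.le_gt_cases z sv).
    + rewrite (sat_prenex_guard w k _ _ B2 A _ Hw Hb);
        [|intros r' Ha; rewrite (Hbody r' Ha); intuition lia].
      unfold B2. rewrite sat_gap_split_ge_branch by (auto; lia). intuition lia.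
    + rewrite (sat_prenex_const w k _ _ A _ Hw Hb); [intuition lia|].
      intros r' Ha. rewrite (Hbody r' Ha). intuition lia.
  - rewrite (sat_prenex_const w k _ _ A _ Hw Hb); [intuition lia|].
    intros r' Ha. rewrite (Hbody r' Ha). intuition lia.
Qed.

Lemma gaps_ge_spec_succ : gap_split_ge_spec k -> gaps_ge_spec (S k).
Proof.
  intros IH r p q s D1 D2 Hp Hq Hs Hpq Hqs HD1 HD2.
  cbn [prefix_forall build_prenex sat].
  pose proof (fun z Hz => sat_gaps_ge_succ_at r p q s D1 D2 z IH Hp Hq Hs Hpq Hqs HD1 HD2 Hz)
    as Hat; cbv zeta in Hat.
  rewrite <- (gap_ge_iff_all_split (fun z => eval_term w r p <= z <= eval_term w r q)),
          <- (gap_ge_iff_all_split (fun z => eval_term w r q < z <= eval_term w r s))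
    by (intros; lia).
  split.
  - intros H. pose proof (proj1 (Hat 1 ltac:(lia)) (H 1 ltac:(lia))) as [HA _].
    split; (split; [tauto|]); intros z Hz; apply (Hat z ltac:(lia)); auto; apply H; lia.
  - intros [[H1 H1'] [H2 H2']] z Hz. apply Hat; auto.
Qed.

Lemma sat_gaps_ge_branch r x z E v : gaps_ge_spec k ->
  term_from (S k) x -> term_from (S k) z ->
  1 <= eval_term w r x <= v -> v <= eval_term w r z <= length w ->
  E <= gap_split_ge_cap (S k) ->
  (sat w (upd r k v) (build_prenex (prefix_forall k)
     (gaps_ge k x (TVar k) z (up_half' E) (low_half' E))) <->
   up_half' E <= v - eval_term w r x /\ low_half' E <= eval_term w r z - v).
Proof.
  intros IH Hx Hz Hxv Hvz HE. pose proof (halves'_spec E). simpl in HE.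
  unfold gaps_ge_spec in IH.
  rewrite IH; rewrite ?eval_term_upd_var, ?eval_term_upd_from by assumption;
    first [apply term_from_succ; assumption | lia | simpl; lia].
Qed.

Lemma sat_gap_split_ge_succ_at r a y b E1 E2 v : gaps_ge_spec k ->
  term_from (S k) a -> term_from (S k) y -> term_from (S k) b ->
  1 <= eval_term w r a <= eval_term w r y ->
  eval_term w r y <= eval_term w r b <= length w ->
  1 <= E1 <= gap_split_ge_cap (S k) -> 1 <= E2 <= gap_split_ge_cap (S k) ->
  let av := eval_term w r a in let yv := eval_term w r y in let bv := eval_term w r b in
  (sat w (upd r k v) (build_prenex (prefix_forall k) (gap_split_ge (S k) a y b E1 E2)) <->
   (av <= v <= yv /\ up_half' E1 <= v - av /\ low_half' E1 <= yv - v) \/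
   (yv < v <= bv /\ up_half' E2 <= v - yv /\ low_half' E2 <= bv - v)).
Proof.
  intros IH Ha Hy Hb Hay Hyb HE1 HE2 av yv bv.
  destruct (prefix_binds_below k) as [Hbf _].
  set (C1 := gaps_ge k a (TVar k) y (up_half' E1) (low_half' E1)).
  set (C2 := gaps_ge k y (TVar k) b (up_half' E2) (low_half' E2)).
  assert (Hbody : forall r', agree_from k (upd r k v) r' ->
    (sat w r' (gap_split_ge (S k) a y b E1 E2) <->
     (av <= v <= yv /\ sat w r' C1) \/ (yv < v <= bv /\ sat w r' C2))).
  { intros r' Hr'. cbn [gap_split_ge sat]. rewrite !sat_FLe. cbn [eval_term].
    rewrite (agree_upd_var k r r' v Hr'), !(eval_term_agree_upd w k r r' v) by auto.
    fold av yv bv. intuition lia. }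
  destruct (Nat.le_gt_cases av v); [destruct (Nat.le_gt_cases v yv)|].
  - rewrite (sat_prenex_congr w k _ _ C1 _ Hbf);
      [|intros r' Hr'; rewrite (Hbody r' Hr'); intuition lia].
    unfold C1. rewrite sat_gaps_ge_branch by (auto; lia).
    intuition lia.
  - destruct (Nat.le_gt_cases v bv).
    + rewrite (sat_prenex_congr w k _ _ C2 _ Hbf);
        [|intros r' Hr'; rewrite (Hbody r' Hr'); intuition lia].
      unfold C2. rewrite sat_gaps_ge_branch by (auto; lia).
      intuition lia.
    + rewrite (sat_prenex_const w k _ _ False _ Hw Hbf); [intuition lia|].
      intros r' Hr'. rewrite (Hbody r' Hr'). intuition lia.
  - rewrite (sat_prenex_const w k _ _ False _ Hw Hbf); [intuition lia|].
    intros r' Hr'. rewrite (Hbody r' Hr'). intuition lia.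
Qed.

Lemma gap_split_ge_spec_succ : gaps_ge_spec k -> gap_split_ge_spec (S k).
Proof.
  intros IH r a y b E1 E2 Ha Hy Hb Hay Hyb HE1 HE2.
  cbn [prefix_exists build_prenex sat].
  pose proof (fun v => sat_gap_split_ge_succ_at r a y b E1 E2 v IH Ha Hy Hb Hay Hyb HE1 HE2)
    as Hat; cbv zeta in Hat.
  rewrite <- gap_ge_iff_ex_split by lia.
  split.
  - intros [v [_ Hsat]]. exists v. apply Hat, Hsat.
  - intros [v Hv]. exists v. split; [lia|]. apply Hat, Hv.
Qed.

End Step.

Lemma sat_gaps_ge k : gaps_ge_spec k /\ gap_split_ge_spec k.
Proof.
  induction k as [|k [IHc IHd]].
  - split; [apply gaps_ge_spec_0|apply gap_split_ge_spec_0].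
  - split; [apply gaps_ge_spec_succ, IHd|apply gap_split_ge_spec_succ, IHc].
Qed.

End Semantics.

Lemma free_in_prenex x qs psi :
  free_in x (build_prenex qs psi) -> free_in x psi /\ ~ In x (map snd qs).
Proof.
  induction qs as [|[b y] qs IH]; simpl; [tauto|].
  destruct b; simpl; intros [Hy Hf]; destruct (IH Hf); split; auto; intros [E|E]; auto.
Qed.

Lemma free_in_gaps_ge x k :
  (forall p q s D1 D2, free_in x (gaps_ge k p q s D1 D2) ->
     x < k \/ term_var p x \/ term_var q x \/ term_var s x) /\
  (forall a y b E1 E2, free_in x (gap_split_ge k a y b E1 E2) ->
     x < k \/ term_var a x \/ term_var y x \/ term_var b x).
Proof.
  assert (Hatom : forall a b D, free_in x (gap_atom a b D) \/ free_in x (gap_pos a b D) ->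
            term_var a x \/ term_var b x).
  { intros a b D. unfold gap_atom, gap_pos. destruct D as [|[|D]]; simpl; tauto. }
  induction k as [|k [IHc IHd]]; split.
  - intros p q s D1 D2 [H|H]; apply (fun H => Hatom _ _ _ (or_introl H)) in H; tauto.
  - intros a y b E1 E2 [H|H]; apply (fun H => Hatom _ _ _ (or_introl H)) in H; tauto.
  - intros p q s D1 D2 H. simpl in H.
    destruct H as [[H|H]|[[H|H]|[H|H]]];
      try (apply (fun H => Hatom _ _ _ (or_intror H)) in H; tauto);
      try (destruct (D1 <=? 1)); try (destruct (D2 <=? 1)); simpl in H;
      repeat match goal with
             | H : _ \/ _ |- _ => destruct H
             | H : _ /\ _ |- _ => destruct H
             | H : free_in _ (gap_split_ge _ _ _ _ _ _) |- _ => apply IHd in H; simpl in H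
             end; try tauto; lia.
  - intros a y b E1 E2 H. simpl in H.
    repeat match goal with
           | H : _ \/ _ |- _ => destruct H
           | H : _ /\ _ |- _ => destruct H
           | H : free_in _ (gaps_ge _ _ _ _ _ _) |- _ => apply IHc in H; simpl in H
           end; try tauto; lia.
Qed.

Lemma quantifier_free_gaps_ge k :
  (forall p q s D1 D2, quantifier_free (gaps_ge k p q s D1 D2)) /\
  (forall a y b E1 E2, quantifier_free (gap_split_ge k a y b E1 E2)).
Proof.
  assert (B : forall a b D, quantifier_free (gap_atom a b D) /\ quantifier_free (gap_pos a b D)).
  { intros a b D. unfold gap_atom, gap_pos. destruct D as [|[|D]]; simpl; tauto. }
  induction k as [|k [IHc IHd]]; split; intros; simpl.
  - split; apply B.
  - split; apply B.
  - repeat split; try apply B; destruct (_ <=? 1); simpl; auto.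
  - repeat split; auto.
Qed.

Lemma prefix_vars k x : x < k ->
  In x (map snd (prefix_forall k)) /\ In x (map snd (prefix_exists k)).
Proof.
  induction k as [|k IH]; intros Hx; [lia|]. simpl.
  destruct (Nat.eq_dec x k) as [->|]; [auto|]. destruct IH; [lia|]. auto.
Qed.

Fixpoint alternating (b : bool) (k : nat) : list bool :=
  match k with 0 => [] | S k' => b :: alternating (negb b) k' end.

Lemma prefix_kinds k :
  map fst (prefix_forall k) = alternating true k /\ map fst (prefix_exists k) = alternating false k.
Proof. induction k as [|k [A B]]; simpl; auto. rewrite A, B. auto. Qed.

Lemma alternating_strictly b k : strictly_alternating (alternating b k).
Proof.
  revert b. induction k as [|k IH]; intros b; simpl; auto.
  destruct k; simpl; auto. split; [destruct b; discriminate|]. apply (IH (negb b)).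
Qed.

Lemma last_alternating b k d :
  last (alternating b (S k)) d = if Nat.even k then b else negb b.
Proof.
  revert b. induction k as [|k IH]; intros b; [reflexivity|].
  change (last (alternating (negb b) (S k)) d = if Nat.even (S k) then b else negb b).
  rewrite IH, Nat.even_succ, <- Nat.negb_even. destruct (Nat.even k), b; reflexivity.
Qed.

Lemma last_map_fst (qs : list (bool * nat)) d : fst (last qs d) = last (map fst qs) (fst d).
Proof. induction qs as [|q qs IH]; simpl; auto. destruct qs; simpl in *; auto. Qed.

Lemma qcount_build_prenex qs psi : qcount (build_prenex qs psi) = length qs + qcount psi.
Proof. induction qs as [|[[|] x] qs IH]; simpl; lia. Qed.

Lemma qcount_quantifier_free psi : quantifier_free psi -> qcount psi = 0.
Proof. induction psi; simpl; intuition lia. Qed.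

Lemma length_prefix_forall k : length (prefix_forall k) = k.
Proof.
  enough (length (prefix_forall k) = k /\ length (prefix_exists k) = k) by tauto.
  induction k as [|k [A B]]; simpl; auto.
Qed.

Lemma gaps_ge_cap_odd j : 3 * gaps_ge_cap (2 * j + 1) = 2 * 4 ^ j + 1.
Proof.
  induction j as [|j IH]; [reflexivity|].
  replace (2 * S j + 1) with (S (S (2 * j + 1))) by lia.
  change (gaps_ge_cap (S (S (2 * j + 1)))) with (2 * (2 * gaps_ge_cap (2 * j + 1)) - 1).
  rewrite Nat.pow_succ_r'. pose proof (caps_pos (2 * j + 1)). lia.
Qed.

(** * The separating sentence *)

(* With [x := TVar K]: some [x] carries the letter [b], lies at distance at
   least [i - 1] from [min] and at least [n - i] from [max], i.e. [x = i]. *)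
Definition letter_matrix (K i n : nat) (b : bool) : formula :=
  FAnd (if b then FS (TVar K) else FNot (FS (TVar K)))
       (gaps_ge K TMin (TVar K) TMax (i - 1) (n - i)).

Definition letter_formula (K i n : nat) (b : bool) : formula :=
  build_prenex ((false, K) :: prefix_forall K) (letter_matrix K i n b).

Lemma quantifier_free_letter_matrix K i n b : quantifier_free (letter_matrix K i n b).
Proof. split; [destruct b; simpl; auto|apply quantifier_free_gaps_ge]. Qed.

Lemma sat_letter_formula w K i b r : 1 <= i <= length w ->
  i - 1 <= gaps_ge_cap K -> length w - i <= gaps_ge_cap K ->
  (sat w r (letter_formula K i (length w) b) <-> nth (i - 1) w false = b).
Proof.
  intros Hi HK1 HK2. destruct (prefix_binds_below K) as [Hb _].
  unfold letter_formula. cbn [build_prenex sat].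
  assert (Hat : forall x, 1 <= x <= length w ->
    (sat w (upd r K x) (build_prenex (prefix_forall K) (letter_matrix K i (length w) b)) <->
     nth (x - 1) w false = b /\ x = i)).
  { intros x Hx.
    rewrite (sat_prenex_guard w K _ _ (gaps_ge K TMin (TVar K) TMax (i - 1) (length w - i))
               (nth (x - 1) w false = b)) by
      (lia || exact Hb ||
       (intros r' Hr'; unfold letter_matrix;
        destruct b; cbn [sat eval_term]; rewrite (agree_upd_var K r r' x Hr');
        destruct (nth (x - 1) w false); intuition congruence)).
    pose proof (proj1 (sat_gaps_ge w ltac:(lia) K)) as Hspec. unfold gaps_ge_spec in Hspec.
    rewrite Hspec; simpl; unfold upd; rewrite ?Nat.eqb_refl; auto; try lia.
    split; intros [? ?]; split; auto; lia. }
  split.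
  - intros [x [Hx Hsat]]. apply Hat in Hsat as [Hsat ->]; auto.
  - intros Hb'. exists i. split; [lia|]. apply Hat; auto.
Qed.

Lemma letter_formula_sentence K i n b : sentence (letter_formula K i n b).
Proof.
  intros x Hf. apply free_in_prenex in Hf as [Hf Hn]. simpl map in Hn.
  destruct Hf as [Hf|Hf].
  - destruct b; simpl in Hf; apply Hn; left; auto.
  - apply (proj1 (free_in_gaps_ge x K)) in Hf. simpl in Hf.
    destruct Hf as [Hf|[Hf|[Hf|Hf]]]; try contradiction.
    + apply Hn. right. apply (proj1 (prefix_vars K x Hf)).
    + apply Hn. left. auto.
Qed.

Lemma letter_formula_alt K i n b : Nat.odd K = true ->
  alt_prenex_ending_forall (letter_formula K i n b).
Proof.
  intros HK. exists ((false, K) :: prefix_forall K), (letter_matrix K i n b).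
  split; [apply quantifier_free_letter_matrix|]. split; [reflexivity|].
  simpl map. rewrite (proj1 (prefix_kinds K)). split; [apply (alternating_strictly false (S K))|].
  split; [discriminate|].
  rewrite last_map_fst. simpl map. rewrite (proj1 (prefix_kinds K)).
  change (last (alternating false (S K)) true = true).
  rewrite last_alternating, <- Nat.negb_odd, HK. reflexivity.
Qed.

Lemma qcount_letter_formula K i n b : qcount (letter_formula K i n b) = S K.
Proof.
  unfold letter_formula. rewrite qcount_build_prenex, qcount_quantifier_free
    by apply quantifier_free_letter_matrix.
  simpl. rewrite length_prefix_forall. lia.
Qed.

Lemma nth_differs w w' : length w = length w' -> w <> w' ->
  exists i, 1 <= i <= length w /\ nth (i - 1) w false <> nth (i - 1) w' false.
Proof.
  intros Hl Hne. apply NNPP. intros Hno. apply Hne.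
  apply nth_ext with false false; [exact Hl|]. intros m Hm.
  destruct (Bool.bool_dec (nth m w false) (nth m w' false)) as [|Hd]; [assumption|].
  exfalso. apply Hno. exists (S m). rewrite Nat.sub_succ, Nat.sub_0_r. split; [lia|exact Hd].
Qed.

Lemma pow2_le_log_ratio n L : 1 <= n -> 2 ^ L <= n -> (INR L <= ln (INR n) / ln 2)%R.
Proof.
  intros Hn HL.
  assert (Hl2 : (0 < ln 2)%R) by (rewrite <- ln_1; apply ln_increasing; lra).
  apply le_INR in HL. rewrite pow_INR in HL. simpl (INR 2) in HL.
  replace (1 + 1)%R with 2%R in HL by lra.
  apply Rmult_le_reg_r with (ln 2); [exact Hl2|].
  unfold Rdiv. rewrite Rmult_assoc, Rinv_l, Rmult_1_r by lra.
  rewrite <- ln_pow by lra.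
  destruct (Rle_lt_or_eq_dec _ _ HL) as [Hlt|Heq]; [|rewrite Heq; apply Rle_refl].
  left. apply ln_increasing; [apply pow_lt; lra|exact Hlt].
Qed.

Lemma odd_level_for_length n : 1 <= n ->
  exists K, Nat.odd K = true /\ n <= gaps_ge_cap K /\ S K <= Nat.log2 n + 5.
Proof.
  intros Hn. set (L := Nat.log2 n). set (j := (L + 3) / 2).
  pose proof (Nat.log2_spec n ltac:(lia)) as [_ HL]. fold L in HL.
  assert (Hj : L + 2 <= 2 * j <= L + 3).
  { unfold j. pose proof (Nat.div_mod (L + 3) 2). pose proof (Nat.mod_upper_bound (L + 3) 2). lia. }
  exists (2 * j + 1). split; [rewrite Nat.odd_add, Nat.odd_mul; reflexivity|]. split; [|lia].
  pose proof (gaps_ge_cap_odd j).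
  assert (H4 : 2 ^ (L + 2) <= 4 ^ j)
    by (replace (4 ^ j) with (2 ^ (2 * j)) by (rewrite Nat.pow_mul_r; reflexivity);
        apply Nat.pow_le_mono_r; lia).
  rewrite Nat.pow_add_r in H4. rewrite Nat.pow_succ_r' in HL. simpl (2 ^ 2) in H4. lia.
Qed.

Lemma upper_bound : exists C : R, forall (n : nat) (w w' : list bool),
  1 <= n -> length w = n -> length w' = n -> w <> w' ->
  exists phi : formula, separates phi w w' /\ alt_prenex_ending_forall phi /\
    (INR (qcount phi) <= ln (INR n) / ln 2 + C)%R.
Proof.
  exists 5%R. intros n w w' Hn Hw Hw' Hne.
  destruct (nth_differs w w' ltac:(lia) Hne) as [i [Hi Hdiff]].
  destruct (odd_level_for_length n Hn) as [K [HK [Hcap Hcount]]].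
  exists (letter_formula K i n (nth (i - 1) w false)).
  split; [|split].
  - split; [apply letter_formula_sentence|]. unfold holds. split.
    + rewrite <- Hw, sat_letter_formula by lia. reflexivity.
    + rewrite <- Hw', sat_letter_formula by lia. congruence.
  - apply letter_formula_alt, HK.
  - rewrite qcount_letter_formula.
    apply le_INR in Hcount. rewrite plus_INR in Hcount. simpl (INR 5) in Hcount.
    pose proof (pow2_le_log_ratio n (Nat.log2 n) Hn (proj1 (Nat.log2_spec n ltac:(lia)))). lra.
Qed.

(** * Gaps relative to the marked position *)

Definition dist (x y : nat) : nat := (x - y) + (y - x).

Definition eq_or_ge (T a b : nat) : Prop := a = b \/ (T <= a /\ T <= b).

Definition straddles (P x y : nat) : nat :=
  if orb (andb (x <? P) (P <? y)) (andb (y <? P) (P <? x)) then 1 else 0.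

Definition same_order (x x' y y' : nat) : Prop :=
  (x < y /\ x' < y') \/ (x = y /\ x' = y') \/ (y < x /\ y' < x').

Definition same_mark (P Q x x' : nat) : Prop := x = P <-> x' = Q.

(* [P], [Q] are the positions of the single 1 in the two strings, [(x, x')] and
   [(y, y')] pairs of corresponding pebbles, [T] the current threshold. *)
Definition pair_equiv (P Q T x x' y y' : nat) : Prop :=
  same_order x x' y y' /\ straddles P x y = straddles Q x' y' /\
  eq_or_ge (T + straddles P x y) (dist x y) (dist x' y').

Definition mark_equiv (P Q T x x' : nat) : Prop :=
  same_order x x' P Q /\ eq_or_ge (T - 1) (dist x P) (dist x' Q).

Lemma straddles_in P x y : x < P < y -> straddles P x y = 1.
Proof.
  intros. unfold straddles.
  destruct (Nat.ltb_spec x P), (Nat.ltb_spec P y); simpl; lia.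
Qed.

Lemma straddles_out P x y : x <= y -> P <= x \/ y <= P -> straddles P x y = 0.
Proof.
  intros. unfold straddles.
  destruct (Nat.ltb_spec x P), (Nat.ltb_spec P y), (Nat.ltb_spec y P), (Nat.ltb_spec P x);
    simpl; lia.
Qed.

Lemma straddles_sym P x y : straddles P x y = straddles P y x.
Proof. unfold straddles. destruct (x <? P), (P <? y), (y <? P), (P <? x); reflexivity. Qed.

Lemma straddles_cases P x y : x <= y ->
  (straddles P x y = 1 /\ x < P < y) \/ (straddles P x y = 0 /\ (P <= x \/ y <= P)).
Proof.
  intros. destruct (Nat.lt_ge_cases x P), (Nat.lt_ge_cases P y).
  - left. split; [apply straddles_in|]; lia.
  - right. split; [apply straddles_out|]; lia.
  - right. split; [apply straddles_out|]; lia.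
  - right. split; [apply straddles_out|]; lia.
Qed.

Lemma straddles_split P x y z : x < y -> y < z ->
  straddles P x z = straddles P x y + (if y =? P then 1 else 0) + straddles P y z.
Proof.
  intros. destruct (Nat.eqb_spec y P) as [<-|].
  - rewrite straddles_in, (straddles_out y x y), (straddles_out y y z); lia.
  - destruct (straddles_cases P x y), (straddles_cases P y z); try lia.
    + rewrite straddles_in; lia.
    + rewrite straddles_in; lia.
    + rewrite straddles_out; lia.
Qed.

Lemma dist_sym x y : dist x y = dist y x.
Proof. unfold dist. lia. Qed.

Lemma dist_le x y : x <= y -> dist x y = y - x.
Proof. unfold dist. lia. Qed.

Lemma dist_ge x y : y <= x -> dist x y = x - y.
Proof. unfold dist. lia. Qed.

Lemma eq_or_ge_add T a b a' b' :
  eq_or_ge T a a' -> eq_or_ge (2 * T - 1) b b' -> eq_or_ge (T - 1) (a + b) (a' + b').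
Proof. unfold eq_or_ge. lia. Qed.

Lemma same_order_sym x x' y y' : same_order x x' y y' -> same_order y y' x x'.
Proof. unfold same_order. lia. Qed.

Lemma same_order_swap x x' y y' : same_order x x' y y' -> same_order x' x y' y.
Proof. unfold same_order. lia. Qed.

Lemma pair_equiv_lt P Q T x x' y y' : x < y -> pair_equiv P Q T x x' y y' ->
  x' < y' /\ straddles P x y = straddles Q x' y' /\
  eq_or_ge (T + straddles P x y) (y - x) (y' - x').
Proof.
  intros Hxy [Ho [Hs Hd]]. unfold same_order in Ho. rewrite !dist_le in Hd by lia.
  split; [lia|]. auto.
Qed.

Lemma pair_equiv_intro P Q T x x' y y' : x < y -> x' < y' ->
  straddles P x y = straddles Q x' y' ->
  eq_or_ge (T + straddles P x y) (y - x) (y' - x') -> pair_equiv P Q T x x' y y'.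
Proof.
  intros. unfold pair_equiv, same_order. rewrite !dist_le by lia. split; [lia|]. auto.
Qed.

Lemma pair_equiv_refl P Q T x x' : pair_equiv P Q T x x' x x'.
Proof.
  unfold pair_equiv, same_order, eq_or_ge, dist.
  rewrite !straddles_out by lia. lia.
Qed.

Lemma pair_equiv_sym P Q T x x' y y' :
  pair_equiv P Q T x x' y y' -> pair_equiv P Q T y y' x x'.
Proof.
  unfold pair_equiv.
  rewrite (straddles_sym P y), (straddles_sym Q y'), (dist_sym y), (dist_sym y').
  intros [? ?]. split; [apply same_order_sym|]; auto.
Qed.

Lemma pair_equiv_swap P Q T x x' y y' :
  pair_equiv P Q T x x' y y' -> pair_equiv Q P T x' x y' y.
Proof.
  intros [? [E ?]]. split; [apply same_order_swap; auto|]. split; [auto|].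
  rewrite <- E. unfold eq_or_ge in *. lia.
Qed.

Lemma mark_equiv_swap P Q T x x' : mark_equiv P Q T x x' -> mark_equiv Q P T x' x.
Proof. unfold mark_equiv, same_order, eq_or_ge. lia. Qed.

Lemma pair_equiv_weaken P Q T T' x x' y y' : T' <= T ->
  pair_equiv P Q T x x' y y' -> pair_equiv P Q T' x x' y y'.
Proof. intros ? [? [? ?]]. unfold pair_equiv, eq_or_ge in *. split; [|split]; auto; lia. Qed.

Lemma mark_equiv_weaken P Q T T' x x' : T' <= T ->
  mark_equiv P Q T x x' -> mark_equiv P Q T' x x'.
Proof. intros ? [? ?]. unfold mark_equiv, eq_or_ge in *. split; auto; lia. Qed.

Lemma mark_equiv_same_mark P Q T x x' : mark_equiv P Q T x x' -> same_mark P Q x x'.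
Proof. unfold mark_equiv, same_mark, same_order. lia. Qed.

(* [same_mark] at the middle point makes the straddle counts add up alike. *)
Lemma pair_equiv_trans P Q T x x' y y' z z' : x <= y <= z ->
  pair_equiv P Q T x x' y y' -> pair_equiv P Q T y y' z z' -> same_mark P Q y y' ->
  pair_equiv P Q T x x' z z'.
Proof.
  intros Hxyz Hxy Hyz Hy.
  destruct (Nat.eq_dec x y) as [<-|].
  { destruct Hxy as [Ho _]. unfold same_order in Ho. replace x' with y' by lia. exact Hyz. }
  destruct (Nat.eq_dec y z) as [<-|].
  { destruct Hyz as [Ho _]. unfold same_order in Ho. replace z' with y' by lia. exact Hxy. }
  apply pair_equiv_lt in Hxy as [? [Sxy Dxy]]; [|lia].
  apply pair_equiv_lt in Hyz as [? [Syz Dyz]]; [|lia].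
  apply pair_equiv_intro; [lia|lia| |].
  - rewrite (straddles_split P x y z), (straddles_split Q x' y' z') by lia.
    unfold same_mark in Hy. destruct (Nat.eqb_spec y P), (Nat.eqb_spec y' Q); tauto || lia.
  - rewrite (straddles_split P x y z) in * by lia.
    pose proof (straddles_cases P x y). pose proof (straddles_cases P y z).
    unfold eq_or_ge in *. destruct (Nat.eqb_spec y P); lia.
Qed.

Lemma gap_reply T D D' x : 1 <= T -> 0 < x < D -> eq_or_ge (2 * T) D D' ->
  exists y, 0 < y < D' /\ eq_or_ge T x y /\ eq_or_ge T (D - x) (D' - y).
Proof.
  unfold eq_or_ge. intros HT Hx [<-|HD].
  - exists x. lia.
  - destruct (Nat.lt_ge_cases x T); [exists x; lia|].
    destruct (Nat.lt_ge_cases (D - x) T); [exists (D' - (D - x)); lia|].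
    exists T. lia.
Qed.

(* A gap [l, u] straddling the mark, read as A = P - l, B = u - P measured
   from the endpoint on the side of the new point x (so the statement serves
   both sides of the mark). *)
Lemma gap_across_mark_reply T A B A' B' x : 2 <= T -> 0 < x < A -> 1 <= B -> 1 <= B' ->
  eq_or_ge (2 * T - 1) A A' -> eq_or_ge (2 * T - 1) B B' ->
  eq_or_ge (2 * T + 1) (A + B) (A' + B') ->
  exists y, 0 < y < A' /\ eq_or_ge T x y /\ eq_or_ge (T - 1) (A - x) (A' - y) /\
    eq_or_ge (T + 1) (A - x + B) (A' - y + B').
Proof.
  unfold eq_or_ge. intros HT Hx HB HB' HA HBB HAB.
  destruct (Nat.eq_dec A A') as [<-|]; [exists x; lia|].
  destruct (Nat.lt_ge_cases x T); [exists x; lia|].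
  destruct (Nat.lt_ge_cases (A - x) T); [exists (A' - (A - x)); lia|].
  exists T. lia.
Qed.

Lemma ex_max_below (D : nat -> Prop) i : D 1 -> 1 <= i ->
  exists l, 1 <= l <= i /\ D l /\ forall y, D y -> y <= i -> y <= l.
Proof.
  intros H1. induction i as [|i IH]; intros Hi; [lia|].
  destruct (classic (D (S i))) as [HD|HD]; [exists (S i); auto|].
  destruct i as [|i]; [contradiction|].
  destruct IH as [l [? [? Hmax]]]; [lia|].
  exists l. split; [lia|]. split; [assumption|].
  intros y Dy Hy. destruct (Nat.eq_dec y (S (S i))) as [->|]; [contradiction|].
  apply Hmax; auto; lia.
Qed.

Lemma ex_min_above (D : nat -> Prop) n i : D n -> i <= n ->
  exists u, i <= u <= n /\ D u /\ forall y, D y -> i <= y -> u <= y.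
Proof.
  intros Hn. remember (n - i) as d eqn:Hd. revert i Hd.
  induction d as [|d IH]; intros i Hd Hi.
  - exists n. split; [lia|]. split; [assumption|]. lia.
  - destruct (classic (D i)) as [HD|HD]; [exists i; split; [lia|]; split; [assumption|]; lia|].
    destruct (IH (S i)) as [u [? [? Hmin]]]; [lia|lia|].
    exists u. split; [lia|]. split; [assumption|].
    intros y Dy Hy. destruct (Nat.eq_dec y i) as [->|]; [contradiction|].
    apply Hmin; auto; lia.
Qed.

(** * One round of the Ehrenfeucht-Fraisse game *)

Section Reply.

Variables (n P Q T : nat) (R : nat -> nat -> Prop).
Hypotheses (HP : 1 <= P <= n) (HQ : 1 <= Q <= n) (R_min : R 1 1) (R_max : R n n)
  (R_range : forall x x', R x x' -> 1 <= x <= n /\ 1 <= x' <= n)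
  (R_pair : forall x x' y y', R x x' -> R y y' -> pair_equiv P Q (2 * T) x x' y y')
  (R_mark : forall x x', R x x' -> mark_equiv P Q (2 * T) x x').

Lemma unpebbled_neighbours i : 1 <= i <= n -> ~ (exists i', R i i') ->
  exists l l' u u', R l l' /\ R u u' /\ l < i < u /\
    forall x x', R x x' -> x <= l \/ u <= x.
Proof.
  intros Hi Hfree.
  destruct (ex_max_below (fun x => exists x', R x x') i) as [l [? [[l' Rl] Hl]]];
    [eauto|lia|].
  destruct (ex_min_above (fun x => exists x', R x x') n i) as [u [? [[u' Ru] Hu]]];
    [eauto|lia|].
  exists l, l', u, u'. split; [|split]; auto. split.
  - destruct (Nat.eq_dec l i) as [->|]; [exfalso; eauto|].
    destruct (Nat.eq_dec u i) as [->|]; [exfalso; eauto|]. lia.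
  - intros x x' Rx. destruct (Nat.le_gt_cases x i); [left; eauto|right; apply Hu; eauto; lia].
Qed.

Lemma pair_equiv_from_neighbours l l' u u' i j :
  R l l' -> R u u' -> (forall x x', R x x' -> x <= l \/ u <= x) -> l <= i <= u ->
  pair_equiv P Q T l l' i j -> pair_equiv P Q T i j u u' ->
  forall x x', R x x' -> pair_equiv P Q T i j x x'.
Proof.
  intros Rl Ru Hsplit Hi Hl Hu x x' Rx.
  assert (Hle : 2 * T >= T) by lia.
  destruct (Hsplit x x' Rx).
  - apply pair_equiv_sym, pair_equiv_trans with l l'; [lia| |exact Hl|].
    + apply (pair_equiv_weaken _ _ _ _ _ _ _ _ Hle), R_pair; auto.
    + apply (mark_equiv_same_mark _ _ (2 * T)), R_mark; auto.
  - apply pair_equiv_trans with u u'; [lia|exact Hu| |].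
    + apply (pair_equiv_weaken _ _ _ _ _ _ _ _ Hle), R_pair; auto.
    + apply (mark_equiv_same_mark _ _ (2 * T)), R_mark; auto.
Qed.

Lemma mark_reply : 1 <= T ->
  mark_equiv P Q T P Q /\ forall x x', R x x' -> pair_equiv P Q T P Q x x'.
Proof.
  intros HT. split; [unfold mark_equiv, same_order, eq_or_ge, dist; lia|].
  intros x x' Rx. pose proof (R_range x x' Rx).
  destruct (R_mark x x' Rx) as [Hside Hd]. unfold eq_or_ge, dist in Hd.
  destruct Hside as [[? ?]|[[-> ->]|[? ?]]].
  - apply pair_equiv_sym, pair_equiv_intro; rewrite ?straddles_out by lia;
      unfold eq_or_ge; lia.
  - apply pair_equiv_refl.
  - apply pair_equiv_intro; rewrite ?straddles_out by lia; unfold eq_or_ge; lia.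
Qed.

(* The distance of the new point to the mark adds up through the endpoint of
   the gap facing the mark. *)
Lemma gap_off_mark_reply l l' u u' i :
  1 <= T -> R l l' -> R u u' -> l < i < u -> straddles P l u = 0 ->
  exists j, l' < j < u' /\ mark_equiv P Q T i j /\
    pair_equiv P Q T l l' i j /\ pair_equiv P Q T i j u u'.
Proof.
  intros HT Rl Ru Hi Hs.
  destruct (pair_equiv_lt P Q (2 * T) l l' u u' ltac:(lia) (R_pair _ _ _ _ Rl Ru))
    as [Hlu' [Hs' Hlu]].
  rewrite Hs, Nat.add_0_r in Hlu. rewrite Hs in Hs'. symmetry in Hs'.
  destruct (straddles_cases P l u ltac:(lia)) as [[? _]|[_ HPside]]; [lia|].
  destruct (straddles_cases Q l' u' ltac:(lia)) as [[? _]|[_ HQside]]; [lia|].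
  destruct (gap_reply T (u - l) (u' - l') (i - l)) as [y [Hy [Hly Hyu]]]; [lia|lia|auto|].
  assert (Hj : l' < l' + y < u') by lia.
  assert (Hlj : pair_equiv P Q T l l' i (l' + y)).
  { apply pair_equiv_intro; [lia|lia|rewrite !straddles_out; lia|].
    rewrite straddles_out, Nat.add_0_r by lia. replace (l' + y - l') with y by lia. exact Hly. }
  assert (Hju : pair_equiv P Q T i (l' + y) u u').
  { apply pair_equiv_intro; [lia|lia|rewrite !straddles_out; lia|].
    rewrite straddles_out, Nat.add_0_r by lia.
    replace (u - i) with (u - l - (i - l)) by lia.
    replace (u' - (l' + y)) with (u' - l' - y) by lia.
    exact Hyu. }
  exists (l' + y). split; [exact Hj|]. split; [|split; assumption].
  destruct (R_mark _ _ Rl) as [Ml Dl], (R_mark _ _ Ru) as [Mu Du].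
  destruct HPside as [HPl|HuP].
  - assert (Q <= l') by (unfold same_order in Ml; lia).
    split; [unfold same_order; lia|].
    rewrite dist_ge in Dl |- * by lia. rewrite dist_ge in Dl |- * by lia.
    replace (i - P) with ((i - l) + (l - P)) by lia.
    replace (l' + y - Q) with (y + (l' - Q)) by lia.
    apply eq_or_ge_add; assumption.
  - assert (u' <= Q) by (unfold same_order in Mu; lia).
    split; [unfold same_order; lia|].
    rewrite dist_le in Du |- * by lia. rewrite dist_le in Du |- * by lia.
    replace (P - i) with ((u - i) + (P - u)) by lia.
    replace (Q - (l' + y)) with ((u' - l' - y) + (Q - u')) by lia.
    apply eq_or_ge_add; [|assumption].
    replace (u - i) with (u - l - (i - l)) by lia. exact Hyu.
Qed.

Lemma gap_across_mark_reply_left l l' u u' i :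
  2 <= T -> R l l' -> R u u' -> l < i < P -> P < u ->
  exists j, l' < j < u' /\ mark_equiv P Q T i j /\
    pair_equiv P Q T l l' i j /\ pair_equiv P Q T i j u u'.
Proof.
  intros HT Rl Ru Hi Hu.
  destruct (pair_equiv_lt P Q (2 * T) l l' u u' ltac:(lia) (R_pair _ _ _ _ Rl Ru))
    as [Hlu' [Hs Hlu]].
  rewrite straddles_in in Hs, Hlu by lia. symmetry in Hs.
  destruct (straddles_cases Q l' u' ltac:(lia)) as [[_ [HlQ HQu]]|[? _]]; [|lia].
  destruct (R_mark _ _ Rl) as [_ Dl], (R_mark _ _ Ru) as [_ Du].
  rewrite dist_le in Dl by lia. rewrite dist_le in Dl by lia.
  rewrite dist_ge in Du by lia. rewrite dist_ge in Du by lia.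
  replace (u - l) with ((P - l) + (u - P)) in Hlu by lia.
  replace (u' - l') with ((Q - l') + (u' - Q)) in Hlu by lia.
  destruct (gap_across_mark_reply T (P - l) (u - P) (Q - l') (u' - Q) (i - l))
    as [y [Hy [Hly [Hyq Hyu]]]]; try assumption; try lia.
  exists (l' + y). split; [lia|]. split; [|split].
  - split; [unfold same_order; lia|].
    rewrite dist_le, dist_le by lia.
    replace (P - i) with (P - l - (i - l)) by lia.
    replace (Q - (l' + y)) with (Q - l' - y) by lia. exact Hyq.
  - apply pair_equiv_intro; [lia|lia|rewrite !straddles_out; lia|].
    rewrite straddles_out, Nat.add_0_r by lia. replace (l' + y - l') with y by lia. exact Hly.
  - apply pair_equiv_intro; [lia|lia|rewrite !straddles_in; lia|].
    rewrite straddles_in by lia.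
    replace (u - i) with (P - l - (i - l) + (u - P)) by lia.
    replace (u' - (l' + y)) with (Q - l' - y + (u' - Q)) by lia. exact Hyu.
Qed.

Lemma gap_across_mark_reply_right l l' u u' i :
  2 <= T -> R l l' -> R u u' -> l < P -> P < i < u ->
  exists j, l' < j < u' /\ mark_equiv P Q T i j /\
    pair_equiv P Q T l l' i j /\ pair_equiv P Q T i j u u'.
Proof.
  intros HT Rl Ru Hl Hi.
  destruct (pair_equiv_lt P Q (2 * T) l l' u u' ltac:(lia) (R_pair _ _ _ _ Rl Ru))
    as [Hlu' [Hs Hlu]].
  rewrite straddles_in in Hs, Hlu by lia. symmetry in Hs.
  destruct (straddles_cases Q l' u' ltac:(lia)) as [[_ [HlQ HQu]]|[? _]]; [|lia].
  destruct (R_mark _ _ Rl) as [_ Dl], (R_mark _ _ Ru) as [_ Du].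
  rewrite dist_le in Dl by lia. rewrite dist_le in Dl by lia.
  rewrite dist_ge in Du by lia. rewrite dist_ge in Du by lia.
  replace (u - l) with ((u - P) + (P - l)) in Hlu by lia.
  replace (u' - l') with ((u' - Q) + (Q - l')) in Hlu by lia.
  destruct (gap_across_mark_reply T (u - P) (P - l) (u' - Q) (Q - l') (u - i))
    as [y [Hy [Hyu [Hyq Hly]]]]; try assumption; try lia.
  exists (u' - y). split; [lia|]. split; [|split].
  - split; [unfold same_order; lia|].
    rewrite dist_ge, dist_ge by lia.
    replace (i - P) with (u - P - (u - i)) by lia.
    replace (u' - y - Q) with (u' - Q - y) by lia. exact Hyq.
  - apply pair_equiv_intro; [lia|lia|rewrite !straddles_in; lia|].
    rewrite straddles_in by lia.
    replace (i - l) with (u - P - (u - i) + (P - l)) by lia.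
    replace (u' - y - l') with (u' - Q - y + (Q - l')) by lia. exact Hly.
  - apply pair_equiv_intro; [lia|lia|rewrite !straddles_out; lia|].
    rewrite straddles_out, Nat.add_0_r by lia. replace (u' - (u' - y)) with y by lia. exact Hyu.
Qed.

Lemma duplicator_reply : 2 <= T -> forall i, 1 <= i <= n ->
  exists j, 1 <= j <= n /\ mark_equiv P Q T i j /\
    forall x x', R x x' -> pair_equiv P Q T i j x x'.
Proof.
  intros HT i Hi.
  destruct (Nat.eq_dec i P) as [->|HiP].
  { exists Q. split; [lia|]. apply mark_reply. lia. }
  destruct (classic (exists i', R i i')) as [[i' Ri]|Hfree].
  { exists i'. split; [apply (R_range _ _ Ri)|]. split.
    - apply mark_equiv_weaken with (2 * T); [lia|auto].
    - intros x x' Rx. apply pair_equiv_weaken with (2 * T); [lia|auto]. }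
  destruct (unpebbled_neighbours i Hi Hfree) as [l [l' [u [u' [Rl [Ru [Hi' Hsplit]]]]]]].
  assert (Hgap : exists j, l' < j < u' /\ mark_equiv P Q T i j /\
            pair_equiv P Q T l l' i j /\ pair_equiv P Q T i j u u').
  { destruct (straddles_cases P l u ltac:(lia)) as [[_ HPin]|[Hs _]].
    - destruct (Nat.lt_ge_cases i P).
      + apply gap_across_mark_reply_left; auto; lia.
      + apply gap_across_mark_reply_right; auto; lia.
    - apply gap_off_mark_reply; auto; lia. }
  destruct Hgap as [j [Hj [Mj [Hl Hu]]]].
  pose proof (R_range _ _ Rl). pose proof (R_range _ _ Ru).
  exists j. split; [lia|]. split; [exact Mj|].
  apply (pair_equiv_from_neighbours l l' u u'); auto; lia.
Qed.

Lemma duplicator_last_reply : 1 <= T -> forall i, 1 <= i <= n ->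
  exists j, 1 <= j <= n /\ same_mark P Q i j /\ forall x x', R x x' -> same_order i j x x'.
Proof.
  intros HT i Hi.
  destruct (Nat.eq_dec i P) as [->|HiP].
  { exists Q. split; [lia|]. split; [unfold same_mark; tauto|].
    intros x x' Rx. apply same_order_sym, (R_mark _ _ Rx). }
  destruct (classic (exists i', R i i')) as [[i' Ri]|Hfree].
  { exists i'. split; [apply (R_range _ _ Ri)|]. split.
    - apply (mark_equiv_same_mark _ _ (2 * T)), R_mark, Ri.
    - intros x x' Rx. apply (R_pair _ _ _ _ Ri Rx). }
  destruct (unpebbled_neighbours i Hi Hfree) as [l [l' [u [u' [Rl [Ru [Hi' Hsplit]]]]]]].
  (* a straddling gap has length at least three on both sides, so it has room
     for a point other than the mark *)
  assert (Hgap : exists j, l' < j < u' /\ j <> Q).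
  { destruct (pair_equiv_lt P Q (2 * T) l l' u u' ltac:(lia) (R_pair _ _ _ _ Rl Ru))
      as [Hlu' [Hs Hd]].
    unfold eq_or_ge in Hd.
    destruct (straddles_cases P l u ltac:(lia)) as [[S1 HPin]|[S0 _]]; rewrite ?S1, ?S0 in Hs, Hd.
    - exists (if Nat.eq_dec (l' + 1) Q then l' + 2 else l' + 1).
      destruct (Nat.eq_dec (l' + 1) Q); lia.
    - symmetry in Hs. destruct (straddles_cases Q l' u' ltac:(lia)) as [[? _]|[_ ?]]; [lia|].
      exists (l' + 1). lia. }
  destruct Hgap as [j [Hj HjQ]].
  pose proof (R_range _ _ Rl). pose proof (R_range _ _ Ru).
  exists j. split; [lia|]. split; [unfold same_mark; lia|].
  intros x x' Rx. destruct (Hsplit x x' Rx).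
  - destruct (R_pair _ _ _ _ Rx Rl) as [Ho _]. unfold same_order in *. lia.
  - destruct (R_pair _ _ _ _ Rx Ru) as [Ho _]. unfold same_order in *. lia.
Qed.

End Reply.

(* With [k] rounds left: gaps agree up to [2^k] (one more across the mark) and
   distances to the mark up to [2^k - 1]; with no round left only the order
   and the mark itself matter. *)
Definition pair_inv (P Q k x x' y y' : nat) : Prop :=
  match k with
  | 0 => same_order x x' y y'
  | S _ => pair_equiv P Q (2 ^ k) x x' y y'
  end.

Definition mark_inv (P Q k x x' : nat) : Prop :=
  match k with
  | 0 => same_mark P Q x x'
  | S _ => mark_equiv P Q (2 ^ k) x x'
  end.

Lemma pair_inv_same_order P Q k x x' y y' :
  pair_inv P Q k x x' y y' -> same_order x x' y y'.
Proof. destruct k; simpl; [auto|]. intros [Ho _]. exact Ho. Qed.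

Lemma mark_inv_same_mark P Q k x x' : mark_inv P Q k x x' -> same_mark P Q x x'.
Proof. destruct k; simpl; [auto|apply mark_equiv_same_mark]. Qed.

Lemma pair_inv_weaken P Q k x x' y y' :
  pair_inv P Q (S k) x x' y y' -> pair_inv P Q k x x' y y'.
Proof.
  destruct k as [|k]; cbn [pair_inv]; [intros [Ho _]; exact Ho|].
  apply pair_equiv_weaken, Nat.pow_le_mono_r; lia.
Qed.

Lemma mark_inv_weaken P Q k x x' : mark_inv P Q (S k) x x' -> mark_inv P Q k x x'.
Proof.
  destruct k as [|k]; cbn [mark_inv]; [apply mark_equiv_same_mark|].
  apply mark_equiv_weaken, Nat.pow_le_mono_r; lia.
Qed.

Lemma pair_inv_refl P Q k x x' : pair_inv P Q k x x' x x'.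
Proof. destruct k; simpl; [unfold same_order; lia|apply pair_equiv_refl]. Qed.

Lemma pair_inv_sym P Q k x x' y y' : pair_inv P Q k x x' y y' -> pair_inv P Q k y y' x x'.
Proof. destruct k; simpl; [apply same_order_sym|apply pair_equiv_sym]. Qed.

Lemma pair_inv_swap P Q k x x' y y' : pair_inv P Q k x x' y y' -> pair_inv Q P k x' x y' y.
Proof. destruct k; simpl; [apply same_order_swap|apply pair_equiv_swap]. Qed.

Lemma mark_inv_swap P Q k x x' : mark_inv P Q k x x' -> mark_inv Q P k x' x.
Proof. destruct k; simpl; [unfold same_mark; tauto|apply mark_equiv_swap]. Qed.

(* The pebbles of a position are the values of all terms (variables and the
   constants [min], [max]) under the two assignments. *)
Definition ef_inv (w w' : list bool) (P Q k : nat) (a b : nat -> nat) : Prop :=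
  (forall t, 1 <= eval_term w a t <= length w /\ 1 <= eval_term w' b t <= length w) /\
  (forall s t, pair_inv P Q k (eval_term w a s) (eval_term w' b s)
                              (eval_term w a t) (eval_term w' b t)) /\
  (forall t, mark_inv P Q k (eval_term w a t) (eval_term w' b t)).

Definition is_var (x : nat) (t : term) : bool :=
  match t with TVar y => Nat.eqb y x | _ => false end.

Lemma eval_term_upd w a x i t :
  eval_term w (upd a x i) t = if is_var x t then i else eval_term w a t.
Proof. destruct t; reflexivity. Qed.

Lemma ef_inv_upd w w' P Q k a b x i j : ef_inv w w' P Q (S k) a b ->
  1 <= i <= length w -> 1 <= j <= length w -> mark_inv P Q k i j ->
  (forall t, pair_inv P Q k i j (eval_term w a t) (eval_term w' b t)) ->
  ef_inv w w' P Q k (upd a x i) (upd b x j).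
Proof.
  intros [Hr [Hp Hm]] Hi Hj Mij Pij. split; [|split].
  - intros t. rewrite !eval_term_upd. destruct (is_var x t); auto.
  - intros s t. rewrite !eval_term_upd. destruct (is_var x s), (is_var x t).
    + apply pair_inv_refl.
    + apply Pij.
    + apply pair_inv_sym, Pij.
    + apply pair_inv_weaken, Hp.
  - intros t. rewrite !eval_term_upd. destruct (is_var x t); auto. apply mark_inv_weaken, Hm.
Qed.

Lemma ef_inv_swap w w' P Q k a b : length w' = length w ->
  ef_inv w w' P Q k a b -> ef_inv w' w Q P k b a.
Proof.
  intros Hl [Hr [Hp Hm]]. split; [|split].
  - intros t. destruct (Hr t). destruct t; simpl in *; lia.
  - intros s t. apply pair_inv_swap, Hp.
  - intros t. apply mark_inv_swap, Hm.
Qed.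

Lemma ef_forth w w' P Q k a b x : length w' = length w ->
  1 <= P <= length w -> 1 <= Q <= length w -> ef_inv w w' P Q (S k) a b ->
  forall i, 1 <= i <= length w ->
  exists j, 1 <= j <= length w /\ ef_inv w w' P Q k (upd a x i) (upd b x j).
Proof.
  intros Hl HP HQ Hinv i Hi. pose proof Hinv as [Hr [Hp Hm]].
  set (R := fun y y' => exists t, eval_term w a t = y /\ eval_term w' b t = y').
  assert (R_min : R 1 1) by (exists TMin; auto).
  assert (R_max : R (length w) (length w)) by (exists TMax; simpl; auto).
  assert (R_range : forall y y', R y y' -> 1 <= y <= length w /\ 1 <= y' <= length w)
    by (intros y y' [t [<- <-]]; apply Hr).
  assert (R_pair : forall y y' z z', R y y' -> R z z' ->
            pair_equiv P Q (2 * 2 ^ k) y y' z z')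
    by (intros y y' z z' [s [<- <-]] [t [<- <-]]; rewrite <- Nat.pow_succ_r'; apply Hp).
  assert (R_mark : forall y y', R y y' -> mark_equiv P Q (2 * 2 ^ k) y y')
    by (intros y y' [t [<- <-]]; rewrite <- Nat.pow_succ_r'; apply Hm).
  destruct k as [|k].
  - destruct (duplicator_last_reply (length w) P Q 1 R) with (i := i)
      as [j [Hj [Mj Pj]]]; auto.
    exists j. split; [exact Hj|]. apply ef_inv_upd; auto.
    intros t. apply Pj. exists t. auto.
  - destruct (duplicator_reply (length w) P Q (2 ^ S k) R) with (i := i)
      as [j [Hj [Mj Pj]]]; auto.
    + rewrite Nat.pow_succ_r'. pose proof (Nat.pow_nonzero 2 k). lia.
    + exists j. split; [exact Hj|]. apply ef_inv_upd; auto.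
      intros t. apply Pj. exists t. auto.
Qed.

Lemma ef_back w w' P Q k a b x : length w' = length w ->
  1 <= P <= length w -> 1 <= Q <= length w -> ef_inv w w' P Q (S k) a b ->
  forall j, 1 <= j <= length w ->
  exists i, 1 <= i <= length w /\ ef_inv w w' P Q k (upd a x i) (upd b x j).
Proof.
  intros Hl HP HQ Hinv j Hj.
  destruct (ef_forth w' w Q P k b a x) with (i := j) as [i [Hi Hinv']];
    try rewrite Hl; auto using ef_inv_swap.
  exists i. split; [lia|]. apply ef_inv_swap in Hinv'; [exact Hinv'|lia].
Qed.

Definition single_one (n P : nat) : list bool :=
  repeat false (P - 1) ++ true :: repeat false (n - P).

Lemma single_one_length n P : 1 <= P <= n -> length (single_one n P) = n.
Proof. intros. unfold single_one. rewrite length_app. simpl. rewrite !repeat_length. lia. Qed.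

Lemma nth_single_one n P x : 1 <= P -> 1 <= x ->
  nth (x - 1) (single_one n P) false = true <-> x = P.
Proof.
  intros HP Hx. unfold single_one.
  destruct (lt_eq_lt_dec (x - 1) (P - 1)) as [[h|h]|h].
  - rewrite app_nth1, nth_repeat by (rewrite repeat_length; lia). split; [discriminate|lia].
  - rewrite app_nth2 by (rewrite repeat_length; lia). rewrite repeat_length.
    replace (x - 1 - (P - 1)) with 0 by lia. simpl. split; auto; lia.
  - rewrite app_nth2 by (rewrite repeat_length; lia). rewrite repeat_length.
    replace (x - 1 - (P - 1)) with (S (x - 1 - (P - 1) - 1)) by lia. simpl.
    rewrite nth_repeat. split; [discriminate|lia].
Qed.

Fixpoint qrank (phi : formula) : nat :=
  match phi with
  | FEq _ _ | FLt _ _ | FS _ => 0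
  | FNot p => qrank p
  | FAnd p q | FOr p q | FImp p q => Nat.max (qrank p) (qrank q)
  | FEx _ p | FAll _ p => S (qrank p)
  end.

Lemma qrank_le_qcount phi : qrank phi <= qcount phi.
Proof. induction phi; simpl; lia. Qed.

Lemma ef_inv_sat_iff w w' P Q : length w' = length w ->
  1 <= P <= length w -> 1 <= Q <= length w ->
  (forall x, 1 <= x -> nth (x - 1) w false = true <-> x = P) ->
  (forall x, 1 <= x -> nth (x - 1) w' false = true <-> x = Q) ->
  forall phi k a b, ef_inv w w' P Q k a b -> qrank phi <= k -> (sat w a phi <-> sat w' b phi).
Proof.
  intros Hl HP HQ HwP HwQ phi.
  induction phi as [s t|s t|t|p IH|p IHp q IHq|p IHp q IHq|p IHp q IHq|x p IH|x p IH];
    intros k a b Hinv Hk; simpl in Hk |- *.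
  - destruct Hinv as [_ [Hp _]]. pose proof (pair_inv_same_order _ _ _ _ _ _ _ (Hp s t)).
    unfold same_order in *. lia.
  - destruct Hinv as [_ [Hp _]]. pose proof (pair_inv_same_order _ _ _ _ _ _ _ (Hp s t)).
    unfold same_order in *. lia.
  - destruct Hinv as [Hr [_ Hm]]. pose proof (mark_inv_same_mark _ _ _ _ _ (Hm t)).
    destruct (Hr t). unfold same_mark in *. rewrite HwP, HwQ by lia. tauto.
  - rewrite (IH k a b); tauto.
  - rewrite (IHp k a b), (IHq k a b) by (auto; lia). tauto.
  - rewrite (IHp k a b), (IHq k a b) by (auto; lia). tauto.
  - rewrite (IHp k a b), (IHq k a b) by (auto; lia). tauto.
  - destruct k as [|k]; [lia|]. rewrite Hl. split.
    + intros [i [Hi Hs]].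
      destruct (ef_forth w w' P Q k a b x Hl HP HQ Hinv i Hi) as [j [Hj Hinv']].
      exists j. split; [exact Hj|]. apply (IH k _ _ Hinv' ltac:(lia)), Hs.
    + intros [j [Hj Hs]].
      destruct (ef_back w w' P Q k a b x Hl HP HQ Hinv j Hj) as [i [Hi Hinv']].
      exists i. split; [exact Hi|]. apply (IH k _ _ Hinv' ltac:(lia)), Hs.
  - destruct k as [|k]; [lia|]. rewrite Hl. split.
    + intros H j Hj.
      destruct (ef_back w w' P Q k a b x Hl HP HQ Hinv j Hj) as [i [Hi Hinv']].
      apply (IH k _ _ Hinv' ltac:(lia)), H, Hi.
    + intros H i Hi.
      destruct (ef_forth w w' P Q k a b x Hl HP HQ Hinv i Hi) as [j [Hj Hinv']].
      apply (IH k _ _ Hinv' ltac:(lia)), H, Hj.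
Qed.

Lemma ef_inv_start n Q k : 1 <= k -> 2 ^ S k <= n -> n <= 2 * Q <= n + 1 ->
  ef_inv (single_one n (S Q)) (single_one n Q) (S Q) Q k (fun _ => 1) (fun _ => 1).
Proof.
  intros Hk Hn HQ.
  assert (HT : 2 * 2 ^ k <= n) by (rewrite <- Nat.pow_succ_r'; exact Hn).
  assert (2 <= 2 ^ k)
    by (destruct k; [lia|rewrite Nat.pow_succ_r'; pose proof (Nat.pow_nonzero 2 k); lia]).
  assert (Hends : forall t, eval_term (single_one n (S Q)) (fun _ => 1) t =
                            eval_term (single_one n Q) (fun _ => 1) t /\
                            (eval_term (single_one n Q) (fun _ => 1) t = 1 \/
                             eval_term (single_one n Q) (fun _ => 1) t = n)).
  { intros []; simpl; rewrite ?single_one_length by lia; auto. }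
  destruct k as [|k]; [lia|].
  split; [|split].
  - intros t. rewrite single_one_length by lia. destruct (Hends t) as [-> ?]. lia.
  - intros s t. cbn [pair_inv]. destruct (Hends s) as [-> [-> | ->]], (Hends t) as [-> [-> | ->]];
      try apply pair_equiv_refl; [|apply pair_equiv_sym];
      apply pair_equiv_intro; rewrite ?straddles_in by lia; unfold eq_or_ge; lia.
  - intros t. cbn [mark_inv]. destruct (Hends t) as [-> [-> | ->]];
      unfold mark_equiv, same_order, eq_or_ge, dist; lia.
Qed.

Lemma lower_bound : exists N : nat, forall n : nat, N <= n ->
  exists w w' : list bool, length w = n /\ length w' = n /\ w <> w' /\
    forall phi : formula, separates phi w w' -> Nat.log2 n <= qcount phi.
Proof.
  exists 4. intros n Hn. set (Q := (n + 1) / 2).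
  assert (HQ : n <= 2 * Q <= n + 1).
  { unfold Q. pose proof (Nat.div_mod (n + 1) 2). pose proof (Nat.mod_upper_bound (n + 1) 2). lia. }
  exists (single_one n (S Q)), (single_one n Q).
  split; [apply single_one_length; lia|]. split; [apply single_one_length; lia|]. split.
  { intros E. assert (H : nth (S Q - 1) (single_one n (S Q)) false = true)
      by (apply nth_single_one; lia).
    rewrite E, nth_single_one in H; lia. }
  intros phi [_ [Hw Hw']].
  destruct (Nat.le_gt_cases (Nat.log2 n) (qcount phi)) as [|Hlt]; [assumption|exfalso].
  pose proof (Nat.log2_spec n ltac:(lia)) as [Hlog _].
  assert (2 <= Nat.log2 n) by (change 2 with (Nat.log2 4); apply Nat.log2_le_mono; lia).
  destruct (Nat.log2 n) as [|r] eqn:Hr; [lia|].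
  pose proof (qrank_le_qcount phi).
  apply Hw'. unfold holds in *.
  apply (ef_inv_sat_iff (single_one n (S Q)) (single_one n Q) (S Q) Q) with (k := r)
    (a := fun _ => 1); rewrite ?single_one_length by lia; try lia.
  - intros x Hx. apply nth_single_one; lia.
  - intros x Hx. apply nth_single_one; lia.
  - apply ef_inv_start; lia.
  - exact Hw.
Qed.

Theorem mainTheorem7 :
  (exists C : R,
     forall (n : nat) (w w' : list bool),
       (1 <= n)%nat -> length w = n -> length w' = n -> w <> w' ->
       exists phi : formula,
         separates phi w w' /\ alt_prenex_ending_forall phi /\
         (INR (qcount phi) <= ln (INR n) / ln 2 + C)%R)
  /\
  (exists N : nat, forall n : nat, (N <= n)%nat ->
     exists w w' : list bool,
       length w = n /\ length w' = n /\ w <> w' /\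
       forall phi : formula, separates phi w w' ->
         (Nat.log2 n <= qcount phi)%nat).
Proof.
  split; [exact upper_bound | exact lower_bound].
Qed.
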